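(* $\mathfrak{G}\left[ (\mathbb{X}, \dagger) \right]_X$ is a Markov category.
   Context: Let $(\mathbb{X}, \dagger)$ be a dagger additive category: a category with a dagger (an identity-on-objects, involutive, contravariant functor $f \mapsto f^\dagger$), enriched in abelian groups with $(f+g)^\dagger = f^\dagger + g^\dagger$, and having all finite biproducts whose projections and injections satisfy $\pi_j^\dagger = \iota_j$. Fix an object $X \in \mathbb{X}$. A map $p: B \to B$ is $\dagger$-positive if $p = \phi^\dagger \circ \phi$ for some map $\phi: B \to D$. The Gauss construction $\mathfrak{G}\left[ (\mathbb{X}, \dagger) \right]_X$ is the category whose objects are those of $\mathbb{X}$, whose maps $A \to B$ are triples $(f,p,x)$ with $f: A \to B$, $p: B \to B$ $\dagger$-positive, and $x: X \to B$; identities are $(\mathsf{id}_A, 0, 0)$ and composition is $(g,q,y) \circ (f,p,x) = (g \circ f, q + g \circ p \circ g^\dagger, y + g \circ x)$. It is symmetric monoidal with $A \otimes B = A \oplus B$, $(f,p,x) \otimes (g,q,y) = \left(f \oplus g, p \oplus q, \begin{bmatrix} x \\ y \end{bmatrix}\right)$, unit the zero object $\mathsf{0}$, and symmetry $\mathsf{swap}_{A,B} = \left(\begin{bmatrix} 0 & \mathsf{id}_B \\ \mathsf{id}_A & 0 \end{bmatrix}, 0, 0\right)$. The copy map is $\mathsf{copy}_A = \left(\begin{bmatrix} \mathsf{id}_A \\ \mathsf{id}_A \end{bmatrix}, 0, 0\right): A \to A \otimes A$ and the delete is $\mathsf{del}_A = (0,0,0): A \to \mathsf{0}$. A Markov category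 is a symmetric monoidal category in which each object carries a cocommutative comonoid $(\mathsf{copy}_A, \mathsf{del}_A)$, coherent with the monoidal structure ($\mathsf{copy}_{A\otimes B} = (\mathsf{id}_A \otimes \mathsf{swap}_{A,B} \otimes \mathsf{id}_B)\circ(\mathsf{copy}_A \otimes \mathsf{copy}_B)$, $\mathsf{del}_{A\otimes B} = \mathsf{del}_A \otimes \mathsf{del}_B$), and such that $\mathsf{del}$ is natural ($\mathsf{del}_B \circ f = \mathsf{del}_A$ for all $f: A \to B$). *)

From mathcomp Require Import all_boot all_algebra.
Set Implicit Arguments. Unset Strict Implicit. Unset Printing Implicit Defensive.
Import GRing.Theory.
Local Open Scope ring_scope.

Record dac_data := DacData {
  ob : Type;
  hom : ob -> ob -> zmodType;
  idm : forall A, hom A A;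
  comp : forall A B C, hom B C -> hom A B -> hom A C;
  dag : forall A B, hom A B -> hom B A;
  zob : ob;
  bip : ob -> ob -> ob;
  pi1 : forall A B, hom (bip A B) A;
  pi2 : forall A B, hom (bip A B) B;
  in1 : forall A B, hom A (bip A B);
  in2 : forall A B, hom B (bip A B)
}.
Arguments idm {_} A.
Arguments comp {_ A B C} g f.
Arguments dag {_ A B} f.
Arguments zob {_}.
Arguments bip {_} A B.
Arguments pi1 {_ A B}.
Arguments pi2 {_ A B}.
Arguments in1 {_ A B}.
Arguments in2 {_ A B}.

Definition dac_axioms (C : dac_data) : Prop :=
  (forall (A B C' D : ob C) (h : hom C' D) (g : hom B C') (f : hom A B),
      comp h (comp g f) = comp (comp h g) f) /\
  (forall (A B : ob C) (f : hom A B), comp (idm B) f = f) /\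
  (forall (A B : ob C) (f : hom A B), comp f (idm A) = f) /\
  (forall (A B C' : ob C) (g g' : hom B C') (f : hom A B),
      comp (g + g') f = comp g f + comp g' f) /\
  (forall (A B C' : ob C) (g : hom B C') (f f' : hom A B),
      comp g (f + f') = comp g f + comp g f') /\
  (forall (A : ob C), dag (idm A) = idm A) /\
  (forall (A B C' : ob C) (g : hom B C') (f : hom A B),
      dag (comp g f) = comp (dag f) (dag g)) /\
  (forall (A B : ob C) (f : hom A B), dag (dag f) = f) /\
  (forall (A B : ob C) (f g : hom A B), dag (f + g) = dag f + dag g) /\
  (* zero object (empty biproduct) *)
  idm (@zob C) = 0 /\
  (forall (A B : ob C), comp (@pi1 C A B) in1 = idm A) /\
  (forall (A B : ob C), comp (@pi2 C A B) in2 = idm B) /\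
  (forall (A B : ob C), comp (@pi1 C A B) in2 = 0) /\
  (forall (A B : ob C), comp (@pi2 C A B) in1 = 0) /\
  (forall (A B : ob C), comp (@in1 C A B) pi1 + comp in2 pi2 = idm (bip A B)) /\
  (forall (A B : ob C), dag (@pi1 C A B) = in1) /\
  (forall (A B : ob C), dag (@pi2 C A B) = in2).

Record DagAddCat := { dac :> dac_data; dac_ax : dac_axioms dac }.

Section DacFacts.
Variable C : DagAddCat.
Let ax := dac_ax C.

Lemma compA' (A B C' D : ob C) (h : hom C' D) (g : hom B C') (f : hom A B) :
  comp h (comp g f) = comp (comp h g) f.
Proof. by case: ax. Qed.
Lemma comp1l (A B : ob C) (f : hom A B) : comp (idm B) f = f.
Proof. by case: ax => _ []. Qed.
Lemma compDl (A B C' : ob C) (g g' : hom B C') (f : hom A B) :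
  comp (g + g') f = comp g f + comp g' f.
Proof. by case: ax => _ [_ [_ []]]. Qed.
Lemma compDr (A B C' : ob C) (g : hom B C') (f f' : hom A B) :
  comp g (f + f') = comp g f + comp g f'.
Proof. by case: ax => _ [_ [_ [_ []]]]. Qed.
Lemma dag_comp (A B C' : ob C) (g : hom B C') (f : hom A B) :
  dag (comp g f) = comp (dag f) (dag g).
Proof. by case: ax => _ [_ [_ [_ [_ [_ []]]]]]. Qed.
Lemma dagK (A B : ob C) (f : hom A B) : dag (dag f) = f.
Proof. by case: ax => _ [_ [_ [_ [_ [_ [_ []]]]]]]. Qed.
Lemma dagD (A B : ob C) (f g : hom A B) : dag (f + g) = dag f + dag g.
Proof. by case: ax => _ [_ [_ [_ [_ [_ [_ [_ []]]]]]]]. Qed.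
Lemma pi1in1 (A B : ob C) : comp (@pi1 C A B) in1 = idm A.
Proof. by case: ax => _ [_ [_ [_ [_ [_ [_ [_ [_ [_ []]]]]]]]]]. Qed.
Lemma pi2in2 (A B : ob C) : comp (@pi2 C A B) in2 = idm B.
Proof. by case: ax => _ [_ [_ [_ [_ [_ [_ [_ [_ [_ [_ []]]]]]]]]]]. Qed.
Lemma pi1in2 (A B : ob C) : comp (@pi1 C A B) in2 = 0.
Proof. by case: ax => _ [_ [_ [_ [_ [_ [_ [_ [_ [_ [_ [_ []]]]]]]]]]]]. Qed.
Lemma pi2in1 (A B : ob C) : comp (@pi2 C A B) in1 = 0.
Proof. by case: ax => _ [_ [_ [_ [_ [_ [_ [_ [_ [_ [_ [_ [_ []]]]]]]]]]]]]. Qed.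
Lemma dag_pi1 (A B : ob C) : dag (@pi1 C A B) = in1.
Proof. by case: ax => _ [_ [_ [_ [_ [_ [_ [_ [_ [_ [_ [_ [_ [_ [_ []]]]]]]]]]]]]]]. Qed.
Lemma dag_pi2 (A B : ob C) : dag (@pi2 C A B) = in2.
Proof. by case: ax => _ [_ [_ [_ [_ [_ [_ [_ [_ [_ [_ [_ [_ [_ [_ []]]]]]]]]]]]]]]. Qed.
Lemma dag_in1 (A B : ob C) : dag (@in1 C A B) = pi1.
Proof. by rewrite -dag_pi1 dagK. Qed.
Lemma dag_in2 (A B : ob C) : dag (@in2 C A B) = pi2.
Proof. by rewrite -dag_pi2 dagK. Qed.

Lemma comp0l (A B C' : ob C) (f : hom A B) : comp (0 : hom B C') f = 0.
Proof.
have h := @compDl A B C' 0 0 f; rewrite addr0 in h.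
by apply: (addrI (comp (0 : hom B C') f)); rewrite -h addr0.
Qed.
Lemma comp0r (A B C' : ob C) (g : hom B C') : comp g (0 : hom A B) = 0.
Proof.
have h := @compDr A B C' g 0 0; rewrite addr0 in h.
by apply: (addrI (comp g (0 : hom A B))); rewrite -h addr0.
Qed.

Definition dpos (B : ob C) (p : hom B B) : Prop :=
  exists (D : ob C) (phi : hom B D), p = comp (dag phi) phi.

Lemma dpos0 (B : ob C) : dpos (0 : hom B B).
Proof. by exists zob, 0; rewrite comp0r. Qed.

Lemma dag_col (B D E : ob C) (a : hom B D) (b : hom B E) :
  comp (dag (comp in1 a + comp in2 b)) (comp in1 a + comp in2 b)
  = comp (dag a) a + comp (dag b) b.
Proof.
rewrite dagD !dag_comp dag_in1 dag_in2 compDl !compDr.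
rewrite -!compA' ![comp pi1 (comp _ _)]compA' ![comp pi2 (comp _ _)]compA'.
by rewrite pi1in1 pi1in2 pi2in1 pi2in2 !comp0l !comp0r !comp1l addr0 add0r.
Qed.

Lemma dpos_comp (B C' : ob C) (g : hom B C') (p : hom B B) (q : hom C' C') :
  dpos p -> dpos q -> dpos (q + comp g (comp p (dag g))).
Proof.
move=> [E [phi ->]] [D [psi ->]].
exists (bip D E), (comp in1 psi + comp in2 (comp phi (dag g))).
rewrite dag_col dag_comp dagK; congr (_ + _).
by rewrite -!compA'.
Qed.

Definition dsum (A B A' B' : ob C) (f : hom A A') (g : hom B B') :
  hom (bip A B) (bip A' B') :=
  comp in1 (comp f pi1) + comp in2 (comp g pi2).
Definition col (Y A B : ob C) (x : hom Y A) (y : hom Y B) : hom Y (bip A B) :=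
  comp in1 x + comp in2 y.

Lemma dpos_dsum (A B : ob C) (p : hom A A) (q : hom B B) :
  dpos p -> dpos q -> dpos (dsum p q).
Proof.
move=> [D [phi ->]] [E [psi ->]].
exists (bip D E), (comp in1 (comp phi pi1) + comp in2 (comp psi pi2)).
rewrite dag_col /dsum !dag_comp dag_pi1 dag_pi2.
by rewrite -!compA'.
Qed.

End DacFacts.
Arguments dsum {C A B A' B'} f g.
Arguments col {C Y A B} x y.

Record smc_data := SmcData {
  sob : Type;
  shom : sob -> sob -> Type;
  sid : forall A, shom A A;
  scomp : forall A B C, shom B C -> shom A B -> shom A C;
  stens : sob -> sob -> sob;
  stensm : forall A B C D, shom A B -> shom C D -> shom (stens A C) (stens B D);
  sunit : sob;
  sassoc : forall A B C, shom (stens (stens A B) C) (stens A (stens B C));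
  sassoc_inv : forall A B C, shom (stens A (stens B C)) (stens (stens A B) C);
  slunit : forall A, shom (stens sunit A) A;
  slunit_inv : forall A, shom A (stens sunit A);
  srunit : forall A, shom (stens A sunit) A;
  srunit_inv : forall A, shom A (stens A sunit);
  sswap : forall A B, shom (stens A B) (stens B A)
}.
Arguments sid {_} A.
Arguments scomp {_ A B C} g f.
Arguments stens {_} A B.
Arguments stensm {_ A B C D} f g.
Arguments sunit {_}.
Arguments sassoc {_} A B C.
Arguments sassoc_inv {_} A B C.
Arguments slunit {_} A.
Arguments slunit_inv {_} A.
Arguments srunit {_} A.
Arguments srunit_inv {_} A.
Arguments sswap {_} A B.

Definition is_symmetric_monoidal (M : smc_data) : Prop :=
  (forall (A B C D : sob M) (h : shom C D) (g : shom B C) (f : shom A B),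
      scomp h (scomp g f) = scomp (scomp h g) f) /\
  (forall (A B : sob M) (f : shom A B), scomp (sid B) f = f) /\
  (forall (A B : sob M) (f : shom A B), scomp f (sid A) = f) /\
  (forall (A B : sob M), stensm (sid A) (sid B) = sid (stens A B)) /\
  (forall (A1 A2 A3 B1 B2 B3 : sob M) (f : shom A1 A2) (g : shom A2 A3)
          (f' : shom B1 B2) (g' : shom B2 B3),
      stensm (scomp g f) (scomp g' f') = scomp (stensm g g') (stensm f f')) /\
  (forall (A A' B B' C C' : sob M) (f : shom A A') (g : shom B B') (h : shom C C'),
      scomp (sassoc A' B' C') (stensm (stensm f g) h)
      = scomp (stensm f (stensm g h)) (sassoc A B C)) /\
  (forall (A B C : sob M), scomp (sassoc A B C) (sassoc_inv A B C) = sid _) /\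
  (forall (A B C : sob M), scomp (sassoc_inv A B C) (sassoc A B C) = sid _) /\
  (forall (A A' : sob M) (f : shom A A'),
      scomp (slunit A') (stensm (sid sunit) f) = scomp f (slunit A)) /\
  (forall (A : sob M), scomp (slunit A) (slunit_inv A) = sid _) /\
  (forall (A : sob M), scomp (slunit_inv A) (slunit A) = sid _) /\
  (forall (A A' : sob M) (f : shom A A'),
      scomp (srunit A') (stensm f (sid sunit)) = scomp f (srunit A)) /\
  (forall (A : sob M), scomp (srunit A) (srunit_inv A) = sid _) /\
  (forall (A : sob M), scomp (srunit_inv A) (srunit A) = sid _) /\
  (forall (A B C D : sob M),
      scomp (sassoc A B (stens C D)) (sassoc (stens A B) C D)
      = scomp (stensm (sid A) (sassoc B C D))
          (scomp (sassoc A (stens B C) D) (stensm (sassoc A B C) (sid D)))) /\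
  (forall (A B : sob M),
      scomp (stensm (sid A) (slunit B)) (sassoc A sunit B)
      = stensm (srunit A) (sid B)) /\
  (forall (A A' B B' : sob M) (f : shom A A') (g : shom B B'),
      scomp (sswap A' B') (stensm f g) = scomp (stensm g f) (sswap A B)) /\
  (forall (A B : sob M), scomp (sswap B A) (sswap A B) = sid _) /\
  (forall (A B C : sob M),
      scomp (sassoc B C A) (scomp (sswap A (stens B C)) (sassoc A B C))
      = scomp (stensm (sid B) (sswap A C))
          (scomp (sassoc B A C) (stensm (sswap A B) (sid C)))).

(* the middle-four interchange (A (x) A) (x) (B (x) B) -> (A (x) B) (x) (A (x) B),
   i.e. id_A (x) swap_{A,B} (x) id_B with the canonical associators inserted *)
Definition smiddle (M : smc_data) (A B : sob M) :
  shom (stens (stens A A) (stens B B)) (stens (stens A B) (stens A B)) :=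
  scomp (sassoc_inv A B (stens A B))
   (scomp (stensm (sid A) (sassoc B A B))
    (scomp (stensm (sid A) (stensm (sswap A B) (sid B)))
     (scomp (stensm (sid A) (sassoc_inv A B B))
       (sassoc A A (stens B B))))).

Definition is_markov_category (M : smc_data)
    (copy : forall A : sob M, shom A (stens A A))
    (del : forall A : sob M, shom A sunit) : Prop :=
  is_symmetric_monoidal M /\
  (forall A : sob M,
      scomp (sassoc A A A) (scomp (stensm (copy A) (sid A)) (copy A))
      = scomp (stensm (sid A) (copy A)) (copy A)) /\
  (forall A : sob M,
      scomp (slunit A) (scomp (stensm (del A) (sid A)) (copy A)) = sid A) /\
  (forall A : sob M,
      scomp (srunit A) (scomp (stensm (sid A) (del A)) (copy A)) = sid A) /\
  (forall A : sob M, scomp (sswap A A) (copy A) = copy A) /\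
  (forall A B : sob M,
      copy (stens A B) = scomp (smiddle A B) (stensm (copy A) (copy B))) /\
  (forall A B : sob M,
      del (stens A B) = scomp (slunit sunit) (stensm (del A) (del B))) /\
  (forall (A B : sob M) (f : shom A B), scomp (del B) f = del A).

Section Gauss.
Variables (C : DagAddCat) (X : ob C).

Record gmap (A B : ob C) := GMap {
  gf : hom A B;
  gp : hom B B;
  gx : hom X B;
  gpos : dpos gp
}.

Definition gid (A : ob C) : gmap A A := @GMap A A (idm A) 0 0 (dpos0 A).

Definition gcomp (A B C' : ob C) (g : gmap B C') (f : gmap A B) : gmap A C' :=
  @GMap A C' (comp (gf g) (gf f))
    (gp g + comp (gf g) (comp (gp f) (dag (gf g))))
    (gx g + comp (gf g) (gx f))
    (dpos_comp (gf g) (gpos f) (gpos g)).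

Definition gtensm (A A' B B' : ob C) (f : gmap A A') (g : gmap B B') :
  gmap (bip A B) (bip A' B') :=
  @GMap (bip A B) (bip A' B') (dsum (gf f) (gf g)) (dsum (gp f) (gp g))
    (col (gx f) (gx g)) (dpos_dsum (gpos f) (gpos g)).

Definition gpure (A B : ob C) (f : hom A B) : gmap A B :=
  @GMap A B f 0 0 (dpos0 B).

Definition bassoc (A B C' : ob C) : hom (bip (bip A B) C') (bip A (bip B C')) :=
  comp in1 (comp pi1 pi1)
  + comp in2 (comp in1 (comp pi2 pi1) + comp in2 pi2).
Definition bassoc_inv (A B C' : ob C) : hom (bip A (bip B C')) (bip (bip A B) C') :=
  comp in1 (comp in1 pi1 + comp in2 (comp pi1 pi2))
  + comp in2 (comp pi2 pi2).
Definition bswap (A B : ob C) : hom (bip A B) (bip B A) :=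
  comp in1 pi2 + comp in2 pi1.

Definition gauss_smc : smc_data :=
  @SmcData (ob C) gmap gid gcomp bip gtensm zob
    (fun A B C' => gpure (bassoc A B C'))
    (fun A B C' => gpure (bassoc_inv A B C'))
    (fun A => gpure (@pi2 C zob A))
    (fun A => gpure (@in2 C zob A))
    (fun A => gpure (@pi1 C A zob))
    (fun A => gpure (@in1 C A zob))
    (fun A B => gpure (bswap A B)).

Definition gcopy (A : ob C) : gmap A (bip A A) := gpure (col (idm A) (idm A)).
Definition gdel (A : ob C) : gmap A zob := gpure 0.

End Gauss.

From mathcomp Require Import all_boot all_algebra.
From Stdlib Require Import ProofIrrelevance.
Set Implicit Arguments. Unset Strict Implicit. Unset Printing Implicit Defensive.
Import GRing.Theory.
Local Open Scope ring_scope.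

(* Every structure map of the Gauss construction is pure, i.e. of the form
   (f, 0, 0), and pure maps compose and tensor exactly as in X, so all
   coherence and comonoid equations reduce to biproduct identities in X.
   The category and bifunctor laws for arbitrary maps (f, p, x) follow from
   bilinearity of composition and functoriality of the dagger.  A pure
   transformation t that is natural in X is natural in the Gauss construction
   because the noise p is carried to t p t^dagger = p' t t^dagger = p', each
   structure map satisfying t t^dagger = id.  Finally del is natural because
   composing with 0 kills all three components. *)

Section Biproducts.
Variable C : DagAddCat.
Implicit Types A B D E : ob C.

Lemma comp1r A B (f : hom A B) : comp f (idm A) = f.
Proof. by case: (dac_ax C) => _ [_ []]. Qed.

Lemma dag1 A : dag (idm A) = idm A.
Proof. by case: (dac_ax C) => _ [_ [_ [_ [_ []]]]]. Qed.

Lemma dag0 A B : dag (0 : hom A B) = 0.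
Proof. by apply: (addrI (dag (0 : hom A B))); rewrite -dagD !addr0. Qed.

Lemma idm_zob : idm (@zob C) = 0.
Proof. by case: (dac_ax C) => _ [_ [_ [_ [_ [_ [_ [_ [_ []]]]]]]]]. Qed.

Lemma col_pi A B : col (@pi1 C A B) pi2 = idm (bip A B).
Proof.
rewrite /col.
by case: (dac_ax C) => _ [_ [_ [_ [_ [_ [_ [_ [_ [_ [_ [_ [_ [_ [-> _]]]]]]]]]]]]]].
Qed.

Lemma hom_zob_eq A (f g : hom A zob) : f = g.
Proof. by rewrite -(comp1l f) -(comp1l g) idm_zob !comp0l. Qed.

Lemma pi1_in1_r A B D (r : hom D A) : comp (@pi1 C A B) (comp in1 r) = r.
Proof. by rewrite compA' pi1in1 comp1l. Qed.
Lemma pi2_in2_r A B D (r : hom D B) : comp (@pi2 C A B) (comp in2 r) = r.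
Proof. by rewrite compA' pi2in2 comp1l. Qed.
Lemma pi1_in2_r A B D (r : hom D B) : comp (@pi1 C A B) (comp in2 r) = 0.
Proof. by rewrite compA' pi1in2 comp0l. Qed.
Lemma pi2_in1_r A B D (r : hom D A) : comp (@pi2 C A B) (comp in1 r) = 0.
Proof. by rewrite compA' pi2in1 comp0l. Qed.

Lemma pi1_col D A B (x : hom D A) (y : hom D B) : comp pi1 (col x y) = x.
Proof. by rewrite /col compDr pi1_in1_r pi1_in2_r addr0. Qed.
Lemma pi2_col D A B (x : hom D A) (y : hom D B) : comp pi2 (col x y) = y.
Proof. by rewrite /col compDr pi2_in1_r pi2_in2_r add0r. Qed.

Lemma pi1_col_r D' D A B (x : hom D A) (y : hom D B) (r : hom D' D) :
  comp pi1 (comp (col x y) r) = comp x r.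
Proof. by rewrite compA' pi1_col. Qed.
Lemma pi2_col_r D' D A B (x : hom D A) (y : hom D B) (r : hom D' D) :
  comp pi2 (comp (col x y) r) = comp y r.
Proof. by rewrite compA' pi2_col. Qed.

Lemma col_comp D' D A B (x : hom D A) (y : hom D B) (r : hom D' D) :
  comp (col x y) r = col (comp x r) (comp y r).
Proof. by rewrite /col compDl -!compA'. Qed.

Lemma dag_col D A B (x : hom D A) (y : hom D B) :
  dag (col x y) = comp (dag x) pi1 + comp (dag y) pi2.
Proof. by rewrite /col dagD !dag_comp dag_in1 dag_in2. Qed.

Lemma bip_hom_ext D A B (h k : hom D (bip A B)) :
  comp pi1 h = comp pi1 k -> comp pi2 h = comp pi2 k -> h = k.
Proof. by move=> e1 e2; rewrite -(comp1l h) -(comp1l k) -col_pi !col_comp e1 e2. Qed.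

Lemma dsumE A B A' B' (f : hom A A') (g : hom B B') :
  dsum f g = col (comp f pi1) (comp g pi2).
Proof. by []. Qed.

Lemma bassocE A B D :
  bassoc A B D = col (comp pi1 pi1) (col (comp pi2 pi1) pi2).
Proof. by []. Qed.
Lemma bassoc_invE A B D :
  bassoc_inv A B D = col (col pi1 (comp pi1 pi2)) (comp pi2 pi2).
Proof. by []. Qed.
Lemma bswapE A B : bswap A B = col pi2 pi1.
Proof. by []. Qed.

Lemma pi1_dsum A B A' B' (f : hom A A') (g : hom B B') :
  comp pi1 (dsum f g) = comp f pi1.
Proof. by rewrite dsumE pi1_col. Qed.
Lemma pi2_dsum A B A' B' (f : hom A A') (g : hom B B') :
  comp pi2 (dsum f g) = comp g pi2.
Proof. by rewrite dsumE pi2_col. Qed.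

End Biproducts.

(* Projecting away the structure maps before distributing composition over
   sums keeps the terms small. *)
Ltac bip_project :=
  rewrite ?dsumE ?bassocE ?bassoc_invE ?bswapE;
  repeat progress rewrite -?compA' ?pi1_col_r ?pi2_col_r ?pi1_col ?pi2_col
    ?pi1_in1_r ?pi2_in2_r ?pi1_in2_r ?pi2_in1_r ?pi1in1 ?pi2in2 ?pi1in2 ?pi2in1
    ?comp0l ?comp0r ?comp1l ?comp1r.

Ltac bip_simpl :=
  repeat progress rewrite
    ?dag_col ?dagD ?dag_comp ?dag_pi1 ?dag_pi2 ?dag_in1 ?dag_in2 ?dagK ?dag0 ?dag1
    -?compA' ?pi1_col_r ?pi2_col_r ?pi1_col ?pi2_col
    ?pi1_in1_r ?pi2_in2_r ?pi1_in2_r ?pi2_in1_r ?pi1in1 ?pi2in2 ?pi1in2 ?pi2in1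
    ?comp0l ?comp0r ?comp1l ?comp1r ?addr0 ?add0r ?compDl ?compDr.

Ltac bip_solve :=
  repeat first [apply: hom_zob_eq | apply: bip_hom_ext];
  bip_project; bip_simpl; rewrite ?addrA.

Section BiproductCoherence.
Variable C : DagAddCat.
Implicit Types A B D E : ob C.

Lemma dag_dsum A B A' B' (f : hom A A') (g : hom B B') :
  dag (dsum f g) = dsum (dag f) (dag g).
Proof. by bip_solve. Qed.

Lemma dsum_comp A1 A2 A3 B1 B2 B3
    (f : hom A1 A2) (g : hom A2 A3) (f' : hom B1 B2) (g' : hom B2 B3) :
  dsum (comp g f) (comp g' f') = comp (dsum g g') (dsum f f').
Proof. by bip_solve. Qed.

Lemma dsumD A B A' B' (f g : hom A A') (f' g' : hom B B') :
  dsum (f + g) (f' + g') = dsum f f' + dsum g g'.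
Proof. by bip_solve. Qed.

Lemma dsum_col_comp D A B A' B'
    (f : hom A A') (g : hom B B') (x : hom D A) (y : hom D B) :
  comp (dsum f g) (col x y) = col (comp f x) (comp g y).
Proof. by bip_solve. Qed.

Lemma colD D A B (x x' : hom D A) (y y' : hom D B) :
  col (x + x') (y + y') = col x y + col x' y'.
Proof. by bip_solve. Qed.

Lemma dsum1 A B : dsum (idm A) (idm B) = idm (bip A B).
Proof. by bip_solve. Qed.

Lemma dsum0 A B A' B' : dsum (0 : hom A A') (0 : hom B B') = 0.
Proof. by bip_solve. Qed.

Lemma col0 D A B : col (0 : hom D A) (0 : hom D B) = 0.
Proof. by bip_solve. Qed.

Lemma bassoc_natural A B D A' B' D' (f : hom A A') (g : hom B B') (h : hom D D') :
  comp (bassoc A' B' D') (dsum (dsum f g) h) = comp (dsum f (dsum g h)) (bassoc A B D).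
Proof. by bip_solve. Qed.

Lemma bassoc_col D A B E (x : hom D A) (y : hom D B) (z : hom D E) :
  comp (bassoc A B E) (col (col x y) z) = col x (col y z).
Proof. by bip_solve. Qed.

Lemma bassoc_unitary A B D : comp (bassoc A B D) (dag (bassoc A B D)) = idm _.
Proof. by bip_solve. Qed.

Lemma bswap_natural A B A' B' (f : hom A A') (g : hom B B') :
  comp (bswap A' B') (dsum f g) = comp (dsum g f) (bswap A B).
Proof. by bip_solve. Qed.

Lemma bswap_col D A B (x : hom D A) (y : hom D B) :
  comp (bswap A B) (col x y) = col y x.
Proof. by bip_solve. Qed.

Lemma bswap_unitary A B : comp (bswap A B) (dag (bswap A B)) = idm _.
Proof. by bip_solve. Qed.

Lemma bassocK A B D : comp (bassoc A B D) (bassoc_inv A B D) = idm _.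
Proof. by bip_solve. Qed.

Lemma bassoc_invK A B D : comp (bassoc_inv A B D) (bassoc A B D) = idm _.
Proof. by bip_solve. Qed.

Lemma in2_pi2_zob A : comp in2 (@pi2 C zob A) = idm _.
Proof. by bip_solve. Qed.

Lemma in1_pi1_zob A : comp in1 (@pi1 C A zob) = idm _.
Proof. by bip_solve. Qed.

Lemma pentagon A B D E :
  comp (bassoc A B (bip D E)) (bassoc (bip A B) D E)
  = comp (dsum (idm A) (bassoc B D E))
      (comp (bassoc A (bip B D) E) (dsum (bassoc A B D) (idm E))).
Proof. by bip_solve. Qed.

Lemma triangle A B :
  comp (dsum (idm A) pi2) (bassoc A zob B) = dsum pi1 (idm B).
Proof. by bip_solve. Qed.

Lemma bswapK A B : comp (bswap B A) (bswap A B) = idm _.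
Proof. by bip_solve. Qed.

Lemma hexagon A B D :
  comp (bassoc B D A) (comp (bswap A (bip B D)) (bassoc A B D))
  = comp (dsum (idm B) (bswap A D))
      (comp (bassoc B A D) (dsum (bswap A B) (idm D))).
Proof. by bip_solve. Qed.

Lemma copy_coassoc A :
  comp (bassoc A A A) (comp (dsum (col (idm A) (idm A)) (idm A)) (col (idm A) (idm A)))
  = comp (dsum (idm A) (col (idm A) (idm A))) (col (idm A) (idm A)).
Proof. by bip_solve. Qed.

Lemma copy_counitl A :
  comp pi2 (comp (dsum (0 : hom A zob) (idm A)) (col (idm A) (idm A))) = idm A.
Proof. by bip_solve. Qed.

Lemma copy_counitr A :
  comp pi1 (comp (dsum (idm A) (0 : hom A zob)) (col (idm A) (idm A))) = idm A.
Proof. by bip_solve. Qed.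

Lemma copy_cocomm A : comp (bswap A A) (col (idm A) (idm A)) = col (idm A) (idm A).
Proof. by bip_solve. Qed.

Lemma copy_bip A B :
  col (idm (bip A B)) (idm (bip A B)) =
  comp (comp (bassoc_inv A B (bip A B))
         (comp (dsum (idm A) (bassoc B A B))
           (comp (dsum (idm A) (dsum (bswap A B) (idm B)))
             (comp (dsum (idm A) (bassoc_inv A B B)) (bassoc A A (bip B B))))))
    (dsum (col (idm A) (idm A)) (col (idm B) (idm B))).
Proof. by bip_solve. Qed.

End BiproductCoherence.

Section GaussCategory.
Variables (C : DagAddCat) (X : ob C).
Implicit Types A B D E : ob C.

Lemma gmap_eq A B (F G : gmap X A B) :
  gf F = gf G -> gp F = gp G -> gx F = gx G -> F = G.
Proof.
case: F G => f p x pos [g q y pos'] /= ef ep ex; subst.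
by rewrite (proof_irrelevance _ pos pos').
Qed.

Lemma gcompA A B D E (h : gmap X D E) (g : gmap X B D) (f : gmap X A B) :
  gcomp h (gcomp g f) = gcomp (gcomp h g) f.
Proof. by apply: gmap_eq => /=; bip_solve. Qed.

Lemma gcomp1l A B (f : gmap X A B) : gcomp (gid X B) f = f.
Proof. by apply: gmap_eq => /=; bip_solve. Qed.

Lemma gcomp1r A B (f : gmap X A B) : gcomp f (gid X A) = f.
Proof. by apply: gmap_eq => /=; bip_solve. Qed.

Lemma gtensm_comp A1 A2 A3 B1 B2 B3 (f : gmap X A1 A2) (g : gmap X A2 A3)
    (f' : gmap X B1 B2) (g' : gmap X B2 B3) :
  gtensm (gcomp g f) (gcomp g' f') = gcomp (gtensm g g') (gtensm f f').
Proof.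
apply: gmap_eq => /=; first exact: dsum_comp.
  by rewrite dag_dsum -!dsum_comp dsumD.
by rewrite dsum_col_comp colD.
Qed.

Lemma gid_pure A : gid X A = gpure X (idm A).
Proof. by []. Qed.

Lemma gcomp_pure A B D (g : hom B D) (f : hom A B) :
  gcomp (gpure X g) (gpure X f) = gpure X (comp g f).
Proof. by apply: gmap_eq; rewrite /= ?comp0l ?comp0r ?addr0. Qed.

Lemma gtensm_pure A B A' B' (f : hom A A') (g : hom B B') :
  gtensm (gpure X f) (gpure X g) = gpure X (dsum f g).
Proof. by apply: gmap_eq; rewrite /= ?dsum0 ?col0. Qed.

Lemma gpure_natural A B A' B' (s : hom A B) (t : hom A' B')
    (F : gmap X A A') (F' : gmap X B B') :
  comp t (dag t) = idm B' ->
  comp t (gf F) = comp (gf F') s ->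
  comp t (gp F) = comp (gp F') t ->
  comp t (gx F) = gx F' ->
  gcomp (gpure X t) F = gcomp F' (gpure X s).
Proof.
move=> t_unitary ef ep ex; apply: gmap_eq => /=; first exact: ef.
  by rewrite add0r compA' ep -compA' t_unitary comp1r comp0l comp0r addr0.
by rewrite add0r ex comp0r addr0.
Qed.

Lemma gassoc_natural A B D A' B' D'
    (f : gmap X A A') (g : gmap X B B') (h : gmap X D D') :
  gcomp (gpure X (bassoc A' B' D')) (gtensm (gtensm f g) h)
  = gcomp (gtensm f (gtensm g h)) (gpure X (bassoc A B D)).
Proof.
apply: gpure_natural;
  [exact: bassoc_unitary | exact: bassoc_natural | exact: bassoc_natural
  | exact: bassoc_col].
Qed.

Lemma glunit_natural A B (f : gmap X A B) :
  gcomp (gpure X pi2) (gtensm (gid X zob) f) = gcomp f (gpure X pi2).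
Proof.
apply: gpure_natural;
  [by rewrite dag_pi2 pi2in2 | exact: pi2_dsum | exact: pi2_dsum | exact: pi2_col].
Qed.

Lemma grunit_natural A B (f : gmap X A B) :
  gcomp (gpure X pi1) (gtensm f (gid X zob)) = gcomp f (gpure X pi1).
Proof.
apply: gpure_natural;
  [by rewrite dag_pi1 pi1in1 | exact: pi1_dsum | exact: pi1_dsum | exact: pi1_col].
Qed.

Lemma gswap_natural A B A' B' (f : gmap X A A') (g : gmap X B B') :
  gcomp (gpure X (bswap A' B')) (gtensm f g) = gcomp (gtensm g f) (gpure X (bswap A B)).
Proof.
apply: gpure_natural;
  [exact: bswap_unitary | exact: bswap_natural | exact: bswap_natural | exact: bswap_col].
Qed.

Lemma gdel_natural A B (f : gmap X A B) : gcomp (gdel X B) f = gdel X A.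
Proof. by apply: gmap_eq; rewrite /= !comp0l ?add0r. Qed.

End GaussCategory.

Ltac gpure_lift :=
  rewrite /gcopy /gdel ?gid_pure ?gtensm_pure ?gcomp_pure; congr (gpure _ _).

Lemma gauss_symmetric_monoidal (C : DagAddCat) (X : ob C) :
  is_symmetric_monoidal (gauss_smc X).
Proof.
do !split; move=> * /=.
- exact: gcompA.
- exact: gcomp1l.
- exact: gcomp1r.
- by gpure_lift; exact: dsum1.
- exact: gtensm_comp.
- exact: gassoc_natural.
- by gpure_lift; exact: bassocK.
- by gpure_lift; exact: bassoc_invK.
- exact: glunit_natural.
- by gpure_lift; exact: pi2in2.
- by gpure_lift; exact: in2_pi2_zob.
- exact: grunit_natural.
- by gpure_lift; exact: pi1in1.
- by gpure_lift; exact: in1_pi1_zob.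
- by gpure_lift; exact: pentagon.
- by gpure_lift; exact: triangle.
- exact: gswap_natural.
- by gpure_lift; exact: bswapK.
- by gpure_lift; exact: hexagon.
Qed.

Theorem mainTheorem1 (C : DagAddCat) (X : ob C) :
  @is_markov_category (gauss_smc X) (@gcopy C X) (@gdel C X).
Proof.
split; first exact: gauss_symmetric_monoidal.
do !split; move=> * /=.
- by gpure_lift; exact: copy_coassoc.
- by gpure_lift; exact: copy_counitl.
- by gpure_lift; exact: copy_counitr.
- by gpure_lift; exact: copy_cocomm.
- by rewrite /smiddle /=; gpure_lift; exact: copy_bip.
- by gpure_lift; exact: hom_zob_eq.
- exact: gdel_natural.
Qed.
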